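(* Let $G=(V,E,\partial)$ be a finite discrete graph with standard weights ($w_e=1$) and no magnetic potential, let $V_0\subseteq V$ and let $V_1\subsetneq V_0$ be a proper subset. For any two different $s$-partitions $A$ and $B$ of a natural number $r\ge4$, the equilateral metric graphs $\mathcal F_{A,V_1}$ and $\mathcal F_{B,V_1}$ associated with the discrete $V_1$-contracted frame unions $F_{A,V_1}(G,V_0)$ and $F_{B,V_1}(G,V_0)$ are isospectral (for the Kirchhoff Laplacian) and not isomorphic.
   Context: A graph $G=(V,E,\partial)$: finite disjoint sets $V,E$, incidence $\partial e=(\partial_-e,\partial_+e)$, inversion $e\mapsto\bar e$ ($\bar{\bar e}=e$, $\bar e\ne e$, $\partial_\pm\bar e=\partial_\mp e$); loops/multiple edges allowed; every vertex has positive degree. Contraction of vertices along an equivalence relation keeps all edges and replaces vertices by classes. Frame member: $G^a$ is the disjoint union of $a$ copies $G\times\{j\}$; with $(v,i)\sim(v',j)$ iff $(v,i)=(v',j)$ or ($v=v'\in V_0$), $F_a(G,V_0)=G^a/\!\sim$. An $s$-partition of $r$ is a multiset $A=\{\!\{a_1,\dots,a_s\}\!\}$ of natural numbers with sum $r$; $F_A=\bigsqcup_{i=1}^sF_{a_i}(G,V_0)\times\{i\}$, and $F_{A,V_1}$ is obtained from $F_A$ by contracting, for each $v_1\in V_1$, the $s$ vertices $([v_1],i)$ into one vertex. The equilateral metric graph $\mathcal G$ of a discrete graph: choose one edge from each pair $\{e,\bar e\}$, replace it by a copy of $[0,1]$, and glue the endpoints $0,1$ of the copy of $e$ to $\partial_-e,\partial_+e$.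 The Kirchhoff Laplacian acts as $-f_e''$ on each edge, on functions in $H^2$ on each edge that are continuous at every vertex and satisfy $\sum_{e\in E_v}f_e'(0)=0$ (derivatives taken outward from $v$) at every vertex $v$. Isospectral means the eigenvalues agree with multiplicity. *)

From HB Require Import structures.
From mathcomp Require Import all_boot all_order all_algebra.
From mathcomp Require Import all_classical all_reals all_analysis.
Set Implicit Arguments. Unset Strict Implicit. Unset Printing Implicit Defensive.
Import Order.TTheory GRing.Theory Num.Theory.

Record graph := Graph {
  gV : finType;
  gE : finType;
  dminus : gE -> gV;
  dplus  : gE -> gV;
  einv   : gE -> gE
}.

Definition wf_graph (G : graph) : Prop :=
  (forall e : gE G, einv (einv e) = e) /\
  (forall e : gE G, einv e <> e) /\
  (forall e : gE G, dminus (einv e) = dplus e /\ dplus (einv e) = dminus e) /\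
  (forall v : gV G, exists e : gE G, dminus e = v).

Definition graph_iso (G H : graph) : Prop :=
  exists (fV : gV G -> gV H) (fE : gE G -> gE H),
    bijective fV /\ bijective fE /\
    (forall e : gE G, fV (dminus e) = dminus (fE e)) /\
    (forall e : gE G, fV (dplus e) = dplus (fE e)) /\
    (forall e : gE G, fE (einv e) = einv (fE e)).

Definition classes (T : finType) (r : rel T) :=
  {C : {set T} | [exists v, C == [set w | r v w]]}.

Definition cls (T : finType) (r : rel T) (v : T) : classes r :=
  exist _ [set w | r v w] (introT existsP (@ex_intro _ (fun v' => [set w | r v w] == [set w | r v' w]) v (eqxx _))).

Definition contract (G : graph) (r : rel (gV G)) : graph :=
  @Graph (classes r) (gE G)
    (fun e => cls r (dminus e)) (fun e => cls r (dplus e)) (@einv G).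

Definition copies (G : graph) (a : nat) : graph :=
  @Graph ((gV G * 'I_a)%type) ((gE G * 'I_a)%type)
    (fun e => (dminus e.1, e.2)) (fun e => (dplus e.1, e.2))
    (fun e => (einv e.1, e.2)).

Definition frame_rel (G : graph) (V0 : {set gV G}) (a : nat) : rel (gV G * 'I_a) :=
  fun x y => (x == y) || ((x.1 == y.1) && (x.1 \in V0)).

Definition frame (G : graph) (V0 : {set gV G}) (a : nat) : graph :=
  @contract (copies G a) (@frame_rel G V0 a).

Definition dunion (I : finType) (F : I -> graph) : graph :=
  @Graph ({i : I & gV (F i)}) ({i : I & gE (F i)})
    (fun e => Tagged (fun i => gV (F i)) (dminus (tagged e)))
    (fun e => Tagged (fun i => gV (F i)) (dplus (tagged e)))
    (fun e => Tagged (fun i => gE (F i)) (einv (tagged e))).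

(* A partition A = {{a_1,...,a_s}} is represented by a sequence (order irrelevant). *)
Definition frame_union (G : graph) (V0 : {set gV G}) (A : seq nat) : graph :=
  dunion (fun i : 'I_(size A) => frame V0 (nth 0 A i)).

(* x is the vertex ([v1], i) of F_A *)
Definition is_class_of (G : graph) (V0 : {set gV G}) (A : seq nat)
    (v1 : gV G) (x : gV (frame_union V0 A)) : bool :=
  [exists j : 'I_(nth 0 A (tag x)), (v1, j) \in val (tagged x)].

Definition V1_rel (G : graph) (V0 V1 : {set gV G}) (A : seq nat)
    : rel (gV (frame_union V0 A)) :=
  fun x y => (x == y) ||
    [exists v1 in V1, @is_class_of G V0 A v1 x && @is_class_of G V0 A v1 y].

Definition contracted_frame_union (G : graph) (V0 V1 : {set gV G}) (A : seq nat)
  : graph := @contract (frame_union V0 A) (@V1_rel G V0 V1 A).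

Definition is_partition (s r : nat) (A : seq nat) : bool :=
  (size A == s) && all (fun a => 0 < a) A && (sumn A == r).

(* Each oriented edge e is a copy of [0,1] from ∂_- e (at 0) to ∂_+ e (at 1); the
   function on ē is the reversed function on e: f_ē(x) = f_e(1 - x).
   Eigenfunctions on [0,1] are smooth and extend uniquely to solutions of
   the ODE on all of R; we represent each f_e by this extension. *)
Section Metric.
Variable R : realType.
Local Open Scope ring_scope.

Definition kirchhoff_eigenfunction (G : graph) (lam : R) (f : gE G -> R -> R)
  : Prop :=
  (forall e x, derivable (f e) x 1 /\ derivable (derive1 (f e)) x 1 /\
               - derive1 (derive1 (f e)) x = lam * f e x) /\
  (forall e x, f (einv e) x = f e (1 - x)) /\
  (exists phi : gV G -> R, forall e, f e 0 = phi (dminus e)) /\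
  (forall v : gV G, \sum_(e | dminus e == v) derive1 (f e) 0 = 0).

Definition has_m_indep_eigenfunctions (G : graph) (lam : R) (m : nat) : Prop :=
  exists fs : 'I_m -> gE G -> R -> R,
    (forall i, @kirchhoff_eigenfunction G lam (fs i)) /\
    (forall c : 'I_m -> R,
       (forall e x, 0 <= x <= 1 -> \sum_(i < m) c i * fs i e x = 0) ->
       forall i, c i = 0).

Definition isospectral (G H : graph) : Prop :=
  forall (lam : R) (m : nat),
    @has_m_indep_eigenfunctions G lam m <-> @has_m_indep_eigenfunctions H lam m.
End Metric.

(* The edges of F_{A,V1} lying over an edge e of G are indexed by the r copies
   (i, j), j < a_i, of G, so a function on the edges of F_{A,V1} is, over each
   edge of G, a vector in R^r.  Over a vertex v of G these copies are glued
   all together (v in V1), within each frame member (v in V0 \ V1), or not at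
   all (v outside V0).  Hence an injective linear map R^{copies of A} ->
   R^{copies of B} that preserves the vectors constant on glued classes and the
   vectors with vanishing class sums, applied edgewise, carries independent
   Kirchhoff eigenfunctions of F_{A,V1} to independent eigenfunctions of F_{B,V1}.
   Such a map exists whenever A and B have the same number of parts and the
   same sum: keep the block means (shifted to preserve the total sum) and move
   the deviations from them along a bijection between the non-first copies.

   Conversely, the edge sum of deg(d_- e)^k is an isomorphism invariant; for
   F_{A,V1} it is a quantity depending only on r plus a positive multiple
   (V1 <> V0) of sum_i a_i^(k+1).  Power sums of all positive orders determine
   a multiset of naturals, so F_{A,V1} and F_{B,V1} are not isomorphic. *)

From HB Require Import structures.
From mathcomp Require Import all_boot all_order all_algebra.
From mathcomp Require Import all_classical all_reals all_analysis.
From mathcomp Require Import ring zify.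

Set Implicit Arguments. Unset Strict Implicit. Unset Printing Implicit Defensive.
Import Order.TTheory GRing.Theory Num.Theory.

Section Classes.
Variables (T : finType) (r : rel T).

Lemma cls_surj (C : classes r) : exists x, C = cls r x.
Proof. by case: C => S /[dup] /existsP [v /eqP S_v] ?; exists v; apply: val_inj. Qed.

Hypotheses (r_refl : reflexive r) (r_sym : symmetric r) (r_trans : transitive r).

Lemma cls_eqE x y : (cls r x == cls r y) = r x y.
Proof.
apply/eqP/idP => [/(congr1 val) /setP /(_ y)|rxy]; first by rewrite !inE r_refl => ->.
by apply: val_inj; apply/setP => w; rewrite !inE; apply/idP/idP; apply: r_trans; rewrite // r_sym.
Qed.
End Classes.

(* [copy X] indexes the copies G x {(i, j)}, j < X_i, of which the frame union
   F_X consists; the edges of F_{X,V1} are the pairs (copy, edge of G), see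
   [edge_at]. *)
Definition copy (X : seq nat) := {i : 'I_(size X) & 'I_(nth 0 X i)}.

Lemma copy_eqE (X : seq nat) (a b : copy X) :
  (a == b) = (tag a == tag b) && (tagged a == tagged b :> nat).
Proof.
case: a b => i j [i' j']; case: (eqVneq i i') => [E|ne] /=; first by subst i'; rewrite eq_Tagged.
by apply/negbTE/negP => /eq_tag /eqP; rewrite (negbTE ne).
Qed.

Section Copies.
Variable X : seq nat.

Lemma sumn_ord : sumn X = \sum_(i < size X) nth 0 X i.
Proof. by rewrite sumnE (big_nth 0) big_mkord. Qed.

Lemma big_copy (T : Type) (idx : T) (op : Monoid.com_law idx) (F : copy X -> T) :
  \big[op/idx]_(a : copy X) F a =
  \big[op/idx]_(i < size X) \big[op/idx]_(j < nth 0 X i) F (Tagged _ j).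
Proof.
rewrite (@sig_big_dep _ _ _ _ (fun i : 'I_(size X) => 'I_(nth 0 X i)) xpredT
  (fun i _ => true) (fun i j => F (Tagged (fun i : 'I_(size X) => 'I_(nth 0 X i)) j))).
by apply: eq_bigr => -[].
Qed.

Lemma big_copy_block (T : Type) (idx : T) (op : Monoid.com_law idx)
    (F : copy X -> T) (i : 'I_(size X)) :
  \big[op/idx]_(a | tag a == i) F a = \big[op/idx]_(j < nth 0 X i) F (Tagged _ j).
Proof.
rewrite big_mkcond big_copy (bigD1 i) //= [S in op _ S]big1 ?Monoid.mulm1.
  by apply: eq_bigr => j _; rewrite eqxx.
by move=> k /negbTE nk; apply: big1 => j _; rewrite nk.
Qed.

Lemma card_copy : #|{: copy X}| = sumn X.
Proof.
rewrite -sum1_card big_copy sumn_ord; apply: eq_bigr => i _.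
by rewrite sum1_card card_ord.
Qed.

Lemma nth_gt0 (X_pos : all (fun x => 0 < x) X) (i : 'I_(size X)) : 0 < nth 0 X i.
Proof. exact: (all_nthP 0 X_pos). Qed.

Definition first_copy (X_pos : all (fun x => 0 < x) X) (i : 'I_(size X)) : copy X :=
  Tagged (fun i : 'I_(size X) => 'I_(nth 0 X i)) (Ordinal (nth_gt0 X_pos i)).

Definition tail_copy := {a : copy X | 0 < tagged a}.

Lemma card_tail_copy : all (fun x => 0 < x) X -> #|{: tail_copy}| = sumn X - size X.
Proof.
move=> X_pos; rewrite card_sig -sum1_card big_mkcond big_copy /= sumn_ord.
transitivity (\sum_(i < size X) (nth 0 X i - 1)); last first.
  by rewrite sumnB => [|i _]; [rewrite sum1_card card_ord | exact: nth_gt0].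
apply: eq_bigr => i _; rewrite (eq_bigr (fun j : 'I_(nth 0 X i) => (0 < j : nat))) //.
case: (nth 0 X i) => [|n]; first by rewrite big_ord0.
by rewrite big_ord_recl add0n (eq_bigr (fun=> 1)) // sum1_card card_ord subn1.
Qed.
End Copies.

Lemma exists_surj_of_card (T1 T2 : finType) :
  #|T1| = #|T2| -> exists f : T2 -> T1, forall x, exists y, f y = x.
Proof.
move=> eq_card; exists (fun y => enum_val (cast_ord (esym eq_card) (enum_rank y))) => x.
by exists (enum_val (cast_ord eq_card (enum_rank x))); rewrite enum_valK cast_ordK enum_rankK.
Qed.

Section Gluing.
Variables (G : graph) (V0 V1 : {set gV G}) (X : seq nat).

(* The copies that share the vertex of F_{X,V1} lying over [v]
   (see [dminus_edge_at_eq]). *)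
Definition glued (v : gV G) : rel (copy X) := fun a a' =>
  if v \in V1 then true else if v \in V0 then tag a == tag a' else a == a'.

Lemma glued_refl v : reflexive (glued v).
Proof. by move=> a; rewrite /glued !eqxx; case: (v \in V1); case: (v \in V0). Qed.

Lemma glued_sym v : symmetric (glued v).
Proof. by move=> a a'; rewrite /glued eq_sym [a == _]eq_sym. Qed.

Lemma glued_trans v : transitive (glued v).
Proof.
move=> a' a a''; rewrite /glued; case: ifP => // _.
by case: ifP => _ /eqP -> /eqP ->.
Qed.
End Gluing.

Section FrameUnion.
Variables (G : graph) (V0 V1 : {set gV G}) (X : seq nat).
Hypothesis V1_sub : V1 \subset V0.

Lemma frame_rel_refl n : reflexive (@frame_rel G V0 n).
Proof. by move=> x; rewrite /frame_rel eqxx. Qed.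

Lemma frame_rel_sym n : symmetric (@frame_rel G V0 n).
Proof.
move=> x y; rewrite /frame_rel eq_sym; congr (_ || _).
by have [->|ne] := eqVneq x.1 y.1; rewrite ?eqxx // eq_sym (negbTE ne).
Qed.

Lemma frame_rel_trans n : transitive (@frame_rel G V0 n).
Proof.
move=> y x z /orP [/eqP -> //|/andP [/eqP exy x0]] /orP [/eqP <-|/andP [/eqP eyz _]].
  by rewrite /frame_rel exy eqxx -exy x0 orbT.
by rewrite /frame_rel exy eyz eqxx -eyz -exy x0 orbT.
Qed.

Definition vert_at (a : copy X) (v : gV G) : gV (frame_union V0 X) :=
  Tagged (fun i : 'I_(size X) => gV (frame V0 (nth 0 X i)))
    (cls (@frame_rel G V0 _) (v, tagged a)).

Lemma vert_at_surj (x : gV (frame_union V0 X)) : exists a v, x = vert_at a v.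
Proof.
case: x => i C; have [[v j] ->] := cls_surj C.
by exists (Tagged (fun i : 'I_(size X) => 'I_(nth 0 X i)) j), v.
Qed.

Lemma is_class_of_vert_at v1 a v : is_class_of v1 (vert_at a v) = (v == v1).
Proof.
apply/existsP/idP => [[j]|/eqP <-]; last by exists (tagged a); rewrite inE frame_rel_refl.
by rewrite inE /frame_rel /= => /orP [/eqP [-> _]|/andP [/eqP -> _]].
Qed.

Lemma vert_at_eq a v a' v' :
  (vert_at a v == vert_at a' v') = (v == v') && (if v \in V0 then tag a == tag a' else a == a').
Proof.
case: a a' => i j [i' j']; case: (eqVneq i i') => [E|ne] /=.
  subst i'; rewrite eq_Tagged cls_eqE;
    [|exact: frame_rel_refl | exact: frame_rel_sym | exact: frame_rel_trans].
  rewrite /frame_rel /= xpair_eqE eq_Tagged; case: (v == v') => //=.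
  by case: (v \in V0); rewrite ?orbT ?orbF.
rewrite copy_eqE /= (negbTE ne) /= if_same andbF.
by apply/negbTE/negP => /eq_tag /eqP; rewrite (negbTE ne).
Qed.

Lemma V1_rel_vert_at a v a' v' :
  @V1_rel G V0 V1 X (vert_at a v) (vert_at a' v') = (v == v') && glued V0 V1 v a a'.
Proof.
rewrite /V1_rel.
have -> : [exists v1 in V1, is_class_of v1 (vert_at a v) && is_class_of v1 (vert_at a' v')] =
          (v == v') && (v \in V1).
  apply/existsP/andP => [[v1]|[/eqP <- v1]].
    by rewrite !is_class_of_vert_at => /and3P [v1V /eqP -> /eqP ->].
  by exists v; rewrite v1 !is_class_of_vert_at eqxx.
rewrite vert_at_eq -andb_orr /glued; case: (v == v') => //=.
have [vV1|_] := boolP (v \in V1); last by rewrite orbF.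
by rewrite (fintype.subsetP V1_sub _ vV1) orbT.
Qed.

Lemma V1_rel_refl : reflexive (@V1_rel G V0 V1 X).
Proof. by move=> x; have [a [v ->]] := vert_at_surj x; rewrite V1_rel_vert_at eqxx glued_refl. Qed.

Lemma V1_rel_sym : symmetric (@V1_rel G V0 V1 X).
Proof.
move=> x y; have [a [v ->]] := vert_at_surj x; have [a' [v' ->]] := vert_at_surj y.
by rewrite !V1_rel_vert_at eq_sym; case: eqP => // ->; rewrite glued_sym.
Qed.

Lemma V1_rel_trans : transitive (@V1_rel G V0 V1 X).
Proof.
move=> y x z; have [a' [v' ->]] := vert_at_surj y.
have [a [v ->]] := vert_at_surj x; have [a'' [v'' ->]] := vert_at_surj z.
rewrite !V1_rel_vert_at => /andP [/eqP <- g1] /andP [/eqP <- g2].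
by rewrite eqxx; move: g1 g2; apply: glued_trans.
Qed.

Local Notation CFU := (contracted_frame_union V0 V1 X).

Definition edge_at (a : copy X) (e : gE G) : gE CFU :=
  Tagged (fun i : 'I_(size X) => gE (frame V0 (nth 0 X i)))
    ((e, tagged a) : gE (frame V0 (nth 0 X (tag a)))).

Definition edge_copy (eps : gE CFU) : copy X :=
  Tagged (fun i : 'I_(size X) => 'I_(nth 0 X i)) (tagged eps).2.

Definition edge_base (eps : gE CFU) : gE G := (tagged eps).1.

Lemma edge_at_copy_base eps : edge_at (edge_copy eps) (edge_base eps) = eps.
Proof. by case: eps => i []. Qed.

Lemma edge_at_surj eps : exists a e, eps = edge_at a e.
Proof. by exists (edge_copy eps), (edge_base eps); rewrite edge_at_copy_base. Qed.

Lemma edge_copy_at a e : edge_copy (edge_at a e) = a.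
Proof. by case: a. Qed.

Lemma einv_edge_at a e : einv (edge_at a e) = edge_at a (einv e).
Proof. by []. Qed.

Lemma dminus_edge_at_eq a e a' e' :
  (dminus (edge_at a e) == dminus (edge_at a' e')) =
  (dminus e == dminus e') && glued V0 V1 (dminus e) a a'.
Proof. by rewrite -V1_rel_vert_at -(cls_eqE V1_rel_refl V1_rel_sym V1_rel_trans). Qed.

Lemma big_edge_at (T : Type) (idx : T) (op : Monoid.com_law idx)
    (P : pred (gE CFU)) (F : gE CFU -> T) :
  \big[op/idx]_(eps | P eps) F eps =
  \big[op/idx]_(a : copy X) \big[op/idx]_(e | P (edge_at a e)) F (edge_at a e).
Proof.
rewrite pair_big_dep (reindex (fun p : copy X * gE G => edge_at p.1 p.2)) //=.
by exists (fun eps => (edge_copy eps, edge_base eps)) => [[a e]|eps] _;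
  rewrite /= ?edge_copy_at ?edge_at_copy_base.
Qed.

Lemma big_vertex (T : Type) (idx : T) (op : Monoid.com_law idx) (F : gE CFU -> T) a0 e0 :
  \big[op/idx]_(eps | dminus eps == dminus (edge_at a0 e0)) F eps =
  \big[op/idx]_(a | glued V0 V1 (dminus e0) a a0)
     \big[op/idx]_(e | dminus e == dminus e0) F (edge_at a e).
Proof.
rewrite big_edge_at [RHS]big_mkcond; apply: eq_bigr => a _.
by case: ifP => ga; [apply: eq_bigl => e | apply: big_pred0 => e];
  rewrite dminus_edge_at_eq; case: eqP => // ->; rewrite ga.
Qed.
End FrameUnion.

Definition power_sum (j : nat) (s : seq nat) := \sum_(x <- s) x ^ j.

Lemma power_sum_rem j x s : x \in s -> power_sum j s = x ^ j + power_sum j (rem x s).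
Proof. by move=> xs; rewrite /power_sum (perm_big _ (perm_to_rem xs)) big_cons. Qed.

Lemma power_sum_le j c s :
  0 < j -> {in s, forall x, x <= c} -> power_sum j s <= size s * c ^ j.
Proof.
move=> j_gt0; elim: s => [|y s IH] le_c; first by rewrite /power_sum big_nil.
rewrite /power_sum big_cons mulSn leq_add ?leq_exp2r ?le_c ?mem_head //.
by apply: IH => x xs; apply: le_c; rewrite inE xs orbT.
Qed.

Lemma bernoulli_expn c j : c ^ j * (c + j) <= c * (c + 1) ^ j.
Proof.
elim: j => [|j IH]; first by rewrite !expn0 mul1n muln1 addn0.
rewrite !expnS; move: IH; set x := c ^ j; set y := (c + 1) ^ j => IH.
have xc_le : x * c <= c * y by nia.
nia.
Qed.

Lemma exists_expn_gt n c : exists2 j, 0 < j & n * c ^ j < (c + 1) ^ j.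
Proof.
case: c => [|c]; first by exists 1; rewrite // muln0.
exists (n * c.+1).+1 => //; have := bernoulli_expn c.+1 (n * c.+1).+1.
set j := (n * c.+1).+1; set x := c.+1 ^ j; set y := (c.+1 + 1) ^ j => le_xy.
by rewrite -(ltn_pmul2l (ltn0Sn c)); apply: leq_trans le_xy; rewrite /j; nia.
Qed.

Lemma bigmax_mem (s : seq nat) : 0 < size s -> \max_(y <- s) y \in s.
Proof.
case: s => // x s _; elim: s x => [|y s IH] x; first by rewrite big_seq1 mem_head.
by rewrite big_cons /maxn; case: ltnP => _; rewrite inE ?IH ?eqxx ?orbT.
Qed.

Lemma mem_power_sum_max (A B : seq nat) M :
  size A = size B -> (forall j, 0 < j -> power_sum j A = power_sum j B) ->
  M \in A -> {in B, forall b, b <= M} -> M \in B.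
Proof.
move=> size_AB eq_ps MA le_M; apply/negPn/negP => MB.
have lt_M b : b \in B -> b < M.
  by move=> bB; rewrite ltn_neqAle le_M // andbT; apply: contraNneq MB => <-.
have M_gt0 : 0 < M.
  have : 0 < size B by rewrite -size_AB; case: (A) MA.
  by move/(mem_nth 0)/lt_M/(leq_ltn_trans (leq0n _)).
have le_M1 : {in B, forall b, b <= M.-1} by move=> b /lt_M; lia.
have [j j_gt0] := exists_expn_gt (size B) M.-1; rewrite addn1 prednK //.
move/(leq_ltn_trans (power_sum_le j_gt0 le_M1)).
by rewrite -eq_ps // (power_sum_rem j MA) ltnNge leq_addr.
Qed.

Lemma perm_eq_power_sum (A B : seq nat) :
  size A = size B -> (forall j, 0 < j -> power_sum j A = power_sum j B) -> perm_eq A B.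
Proof.
move sA : (size A) => n; elim: n A B sA => [|n IH] A B.
  by move/size0nil => -> /esym/size0nil ->.
move=> sA sB eq_ps; have size_AB := etrans sA sB; set M := \max_(y <- A ++ B) y.
have le_M : {in A ++ B, forall y, y <= M} by move=> y y_in; exact: leq_bigmax_seq.
have le_MA : {in A, forall y, y <= M} by move=> y y_in; apply: le_M; rewrite mem_cat y_in.
have le_MB : {in B, forall y, y <= M} by move=> y y_in; apply: le_M; rewrite mem_cat y_in orbT.
have eq_ps' j : 0 < j -> power_sum j B = power_sum j A by move/eq_ps ->.
have [MA MB] : M \in A /\ M \in B.
  have := @bigmax_mem (A ++ B); rewrite size_cat sA ltn_addr // mem_cat => /(_ isT) /orP [MA|MB].
    by split; last exact: mem_power_sum_max size_AB eq_ps MA le_MB.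
  by split; first exact: mem_power_sum_max (esym size_AB) eq_ps' MB le_MA.
apply: (perm_trans (perm_to_rem MA)); rewrite perm_sym.
apply: (perm_trans (perm_to_rem MB)); rewrite perm_cons perm_sym.
apply: IH; rewrite ?size_rem ?sA -?sB // => j j_gt0.
by apply/(@addnI (M ^ j)); rewrite -!power_sum_rem // eq_ps.
Qed.

Section DegreeMoments.

Definition outdeg (H : graph) (x : gV H) : nat := \sum_(e | dminus e == x) 1.

Definition degree_moment (H : graph) (k : nat) : nat := \sum_(e : gE H) outdeg (dminus e) ^ k.

Lemma degree_moment_iso (H1 H2 : graph) k :
  graph_iso H1 H2 -> degree_moment H1 k = degree_moment H2 k.
Proof.
case=> fV [fE [bij_fV [bij_fE [f_dminus _]]]].
have outdeg_fV x : outdeg (fV x) = outdeg x.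
  rewrite /outdeg (reindex fE) /=; last exact: onW_bij.
  by apply: eq_bigl => e; rewrite -f_dminus (inj_eq (bij_inj bij_fV)).
rewrite /degree_moment [RHS](reindex fE) /=; last exact: onW_bij.
by apply: eq_bigr => e _; rewrite -f_dminus outdeg_fV.
Qed.

Variables (G : graph) (V0 V1 : {set gV G}) (X : seq nat).
Hypothesis V1_sub : V1 \subset V0.

Lemma glued_class_size v (a0 : copy X) :
  \sum_(a | glued V0 V1 v a a0) 1 =
  if v \in V1 then sumn X else if v \in V0 then nth 0 X (tag a0) else 1.
Proof.
rewrite /glued; case: ifP => _; first by rewrite sum1_card card_copy.
by case: ifP => _; [rewrite big_copy_block sum1_card card_ord | rewrite big_pred1_eq].
Qed.

Lemma outdeg_edge_at (a0 : copy X) e0 :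
  outdeg (dminus (edge_at V0 V1 a0 e0)) =
  (\sum_(a | glued V0 V1 (dminus e0) a a0) 1) * outdeg (dminus e0).
Proof. by rewrite /outdeg big_vertex // big_distrl /=; apply: eq_bigr => a _; rewrite mul1n. Qed.

Lemma sum_copy_glued_pow v d k :
  \sum_(a0 : copy X) ((\sum_(a | glued V0 V1 v a a0) 1) * d) ^ k =
  if v \in V0 :\: V1 then d ^ k * power_sum k.+1 X
  else sumn X * ((if v \in V1 then sumn X else 1) * d) ^ k.
Proof.
under eq_bigr do rewrite glued_class_size.
rewrite inE; case: (v \in V1) => /=; first by rewrite sum_nat_const card_copy.
case: (v \in V0); last by rewrite sum_nat_const card_copy.
rewrite (partition_big (fun a => tag a) xpredT) //= /power_sum (big_nth 0) big_mkord.
rewrite big_distrr /=; apply: eq_bigr => i _.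
rewrite (eq_bigr (fun=> (nth 0 X i * d) ^ k)) => [|a /eqP -> //].
by rewrite sum_nat_const -sum1_card big_copy_block sum1_card card_ord expnMn expnS; ring.
Qed.

(* Only the last summand depends on X through more than [sumn X]. *)
Lemma degree_moment_frame k :
  degree_moment (contracted_frame_union V0 V1 X) k =
  \sum_(e | dminus e \notin V0 :\: V1)
     sumn X * ((if dminus e \in V1 then sumn X else 1) * outdeg (dminus e)) ^ k +
  (\sum_(e | dminus e \in V0 :\: V1) outdeg (dminus e) ^ k) * power_sum k.+1 X.
Proof.
rewrite /degree_moment big_edge_at exchange_big /= (bigID (fun e => dminus e \in V0 :\: V1)) addnC.
rewrite big_distrl /=; congr (_ + _); apply: eq_bigr => e e_in;
  by under eq_bigr do rewrite outdeg_edge_at //; rewrite sum_copy_glued_pow; case: ifP e_in.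
Qed.
End DegreeMoments.

Lemma contracted_frame_union_not_iso (G : graph) (V0 V1 : {set gV G}) (A B : seq nat) :
  wf_graph G -> V1 \proper V0 -> size A = size B -> sumn A = sumn B -> ~~ perm_eq A B ->
  ~ graph_iso (contracted_frame_union V0 V1 A) (contracted_frame_union V0 V1 B).
Proof.
move=> [_ [_ [_ has_out]]] V1_proper size_AB sumn_AB neq_AB iso_AB.
have V1_sub := proper_sub V1_proper; have [_ [w wV0 wV1]] := properP V1_proper.
have [ew ew_w] := has_out w.
have S_gt0 k : 0 < \sum_(e | dminus e \in V0 :\: V1) outdeg (dminus e) ^ k.
  rewrite (bigD1 ew) /=; last by rewrite ew_w inE wV0 wV1.
  by rewrite ltn_addr // expn_gt0 ew_w /outdeg (bigD1 ew) ?ew_w.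
move/negP: neq_AB; apply; apply: perm_eq_power_sum size_AB _ => -[//|k] _.
have := degree_moment_iso k iso_AB; rewrite !degree_moment_frame // sumn_AB => /addnI.
by move/eqP; rewrite eqn_pmul2l ?S_gt0 // => /eqP.
Qed.

Section LinearForm.
Variables (R : realType) (I : finType).
Local Open Scope ring_scope.

Definition linear_form (F : (I -> R) -> R) :=
  exists k : I -> R, forall u, F u = \sum_a k a * u a.

Lemma linear_form_proj a0 : linear_form (fun u => u a0).
Proof.
exists (fun a => (a == a0)%:R) => u; rewrite (bigD1 a0) //= eqxx mul1r big1 ?addr0 //.
by move=> a /negbTE ->; rewrite mul0r.
Qed.

Lemma linear_formD F1 F2 :
  linear_form F1 -> linear_form F2 -> linear_form (fun u => F1 u + F2 u).
Proof.
move=> [k1 F1E] [k2 F2E]; exists (fun a => k1 a + k2 a) => u.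
by rewrite F1E F2E -big_split; apply: eq_bigr => a _; rewrite mulrDl.
Qed.

Lemma linear_formZ c F : linear_form F -> linear_form (fun u => c * F u).
Proof.
move=> [k FE]; exists (fun a => c * k a) => u.
by rewrite FE mulr_sumr; apply: eq_bigr => a _; rewrite mulrA.
Qed.

Lemma linear_formN F : linear_form F -> linear_form (fun u => - F u).
Proof. by move/(linear_formZ (-1)) => [k FE]; exists k => u; rewrite -FE mulN1r. Qed.

Lemma linear_form_sum (J : Type) (s : seq J) (P : pred J) (F : J -> (I -> R) -> R) :
  (forall j, linear_form (F j)) -> linear_form (fun u => \sum_(j <- s | P j) F j u).
Proof.
move=> F_lin; elim: s => [|j s [k FE]].
  by exists (fun=> 0) => u; rewrite big_nil big1 // => a _; rewrite mul0r.
rewrite /=; under [fun u => _]funext do rewrite big_cons.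
case: (P j); last by exists k.
by apply: linear_formD; [exact: F_lin | exists k].
Qed.

Lemma linear_form_lincomb (J : finType) F (P : pred J) (c : J -> R) (w : J -> I -> R) :
  linear_form F -> F (fun a => \sum_(j | P j) c j * w j a) = \sum_(j | P j) c j * F (w j).
Proof.
move=> [k FE]; rewrite FE; under eq_bigr do rewrite mulr_sumr.
rewrite exchange_big /=; apply: eq_bigr => j _.
by rewrite FE mulr_sumr; apply: eq_bigr => a _; rewrite mulrCA.
Qed.

Lemma linear_form_sumr (J : finType) F (P : pred J) (w : J -> I -> R) :
  linear_form F -> F (fun a => \sum_(j | P j) w j a) = \sum_(j | P j) F (w j).
Proof.
move=> [k FE]; rewrite FE; under eq_bigr do rewrite mulr_sumr.
by rewrite exchange_big /=; apply: eq_bigr => j _; rewrite FE.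
Qed.

Lemma linear_form0 F : linear_form F -> F (fun=> 0) = 0.
Proof. by move=> [k ->]; rewrite big1 // => a _; rewrite mulr0. Qed.

Lemma is_derive_lincomb (k : I -> R) (h : I -> R -> R) (x : R) :
  (forall a, derivable (h a) x 1) ->
  is_derive x 1 (fun y => \sum_a k a * h a y) (\sum_a k a * derive1 (h a) x).
Proof.
move=> dh; elim: (index_enum I) => [|a s IH].
  by under eq_fun do rewrite big_nil; rewrite big_nil; exact: is_derive_cst.
under eq_fun do rewrite big_cons; rewrite big_cons.
have : is_derive x 1 (k a \*: h a) (k a *: derive1 (h a) x).
  by apply: is_deriveZ; rewrite derive1E; exact: derivableP.
by move/is_deriveD; apply.
Qed.
End LinearForm.

Section VertexConditions.
Variables (R : realType) (H : graph).
Local Open Scope ring_scope.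

Lemma vertex_values (g : gE H -> R) :
  (forall e e', dminus e = dminus e' -> g e = g e') ->
  exists phi : gV H -> R, forall e, g e = phi (dminus e).
Proof.
move=> g_eq; exists (fun x => if [pick e | dminus e == x] is Some e then g e else 0) => e.
by case: pickP => [e' /eqP /esym|/(_ e)]; [exact: g_eq | rewrite eqxx].
Qed.

Lemma kirchhoff_at_sources (g : gE H -> R) :
  (forall e0, \sum_(e | dminus e == dminus e0) g e = 0) ->
  forall x, \sum_(e | dminus e == x) g e = 0.
Proof.
move=> g0 x; case: (pickP (fun e => dminus e == x)) => [e0 /eqP <-|no_e]; first exact: g0.
exact: big_pred0.
Qed.
End VertexConditions.

Section Blocks.
Variables (R : realType) (X : seq nat).
Hypothesis X_pos : all (fun x => 0 < x)%N X.
Local Open Scope ring_scope.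

Definition block_mean (u : copy X -> R) (i : nat) : R :=
  (nth 0%N X i)%:R^-1 * \sum_(a : copy X | (tag a : nat) == i) u a.

Lemma nth_neq0 (i : 'I_(size X)) : (nth 0%N X i)%:R != 0 :> R.
Proof. by rewrite pnatr_eq0 -lt0n nth_gt0. Qed.

Lemma sum_block_const (c : R) (i : 'I_(size X)) :
  \sum_(a : copy X | tag a == i) c = c * (nth 0%N X i)%:R.
Proof. by rewrite big_copy_block sumr_const card_ord mulr_natr. Qed.

Lemma block_sumE (u : copy X -> R) (i : 'I_(size X)) :
  \sum_(a | tag a == i) u a = (nth 0%N X i)%:R * block_mean u i.
Proof. by rewrite /block_mean mulrA mulfV ?nth_neq0 ?mul1r. Qed.

Lemma sum_copy_blocks (u : copy X -> R) :
  \sum_a u a = \sum_(i < size X) \sum_(a | tag a == i) u a.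
Proof. exact: partition_big. Qed.

Lemma block_mean_block_const (u : copy X -> R) a :
  (forall a', tag a' == tag a -> u a' = u a) -> block_mean u (tag a) = u a.
Proof.
move=> u_const; rewrite /block_mean (eq_bigr (fun=> u a)) => [|a' /u_const //].
by rewrite sum_block_const mulrC mulfK ?nth_neq0.
Qed.

Lemma block_mean_eq0 (u : copy X -> R) :
  (forall i : 'I_(size X), \sum_(a | tag a == i) u a = 0) -> forall i, block_mean u i = 0.
Proof.
move=> u0 i; rewrite /block_mean; case: (ltnP i (size X)) => [lt_i|le_i].
  by rewrite [S in _ * S](u0 (Ordinal lt_i)) mulr0.
rewrite big_pred0 ?mulr0 // => a; apply/negbTE; rewrite neq_ltn.
by rewrite (leq_trans (ltn_ord (tag a)) le_i).
Qed.

Lemma linear_form_block_mean i : linear_form (fun u : copy X -> R => block_mean u i).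
Proof. by apply/linear_formZ/linear_form_sum => a; exact: linear_form_proj. Qed.
End Blocks.

Section Transplantation.
Variables (R : realType) (G : graph) (V0 V1 : {set gV G}) (A B : seq nat).
Hypothesis V1_sub : V1 \subset V0.

Local Open Scope ring_scope.

Local Notation FA := (contracted_frame_union V0 V1 A).
Local Notation FB := (contracted_frame_union V0 V1 B).

Variable M : (copy A -> R) -> copy B -> R.
Hypothesis M_linear : forall b, linear_form (M^~ b).
Hypothesis M_inj : forall u, (forall b, M u b = 0) -> forall a, u a = 0.
Hypothesis M_glued_const : forall v u,
  (forall a a', glued V0 V1 v a a' -> u a = u a') ->
  forall b b', glued V0 V1 v b b' -> M u b = M u b'.
Hypothesis M_glued_sum : forall v u,
  (forall a0, \sum_(a | glued V0 V1 v a a0) u a = 0) ->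
  forall b0, \sum_(b | glued V0 V1 v b b0) M u b = 0.

Definition transplant_fun (f : gE FA -> R -> R) : gE FB -> R -> R :=
  fun eps x => M (fun a => f (edge_at V0 V1 a (edge_base eps)) x) (edge_copy eps).

Lemma transplant_fun_at (f : gE FA -> R -> R) b e x :
  transplant_fun f (edge_at V0 V1 b e) x = M (fun a => f (edge_at V0 V1 a e) x) b.
Proof. by rewrite /transplant_fun edge_copy_at. Qed.

Lemma transplant_fun_derive (f : gE FA -> R -> R) : (forall e x, derivable (f e) x 1) ->
  forall eps x, derivable (transplant_fun f eps) x 1 /\
    derive1 (transplant_fun f eps) x = transplant_fun (fun e => derive1 (f e)) eps x.
Proof.
move=> df eps x; have [b [e ->]] := edge_at_surj eps; have [k Mk] := M_linear b.
have -> : transplant_fun f (edge_at V0 V1 b e) = fun y => \sum_a k a * f (edge_at V0 V1 a e) y.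
  by apply/funext => y; rewrite transplant_fun_at Mk.
have der := @is_derive_lincomb R _ k (fun a => f (edge_at V0 V1 a e)) x (fun a => df _ x).
by split; [exact: ex_derive | rewrite derive1E derive_val transplant_fun_at Mk].
Qed.

Lemma transplant_fun_ode (lam : R) (f : gE FA -> R -> R) :
  (forall e x, derivable (f e) x 1 /\ derivable (derive1 (f e)) x 1 /\
               - derive1 (derive1 (f e)) x = lam * f e x) ->
  forall eps x, derivable (transplant_fun f eps) x 1 /\
    derivable (derive1 (transplant_fun f eps)) x 1 /\
    - derive1 (derive1 (transplant_fun f eps)) x = lam * transplant_fun f eps x.
Proof.
move=> ode eps x.
have df e y : derivable (f e) y 1 by case: (ode e y).
have ddf e y : derivable (derive1 (f e)) y 1 by case: (ode e y) => _ [].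
have -> : derive1 (transplant_fun f eps) = transplant_fun (fun e => derive1 (f e)) eps.
  by apply/funext => y; case: (transplant_fun_derive df eps y).
have [dTf _] := transplant_fun_derive df eps x; have [ddTf ->] := transplant_fun_derive ddf eps x.
do 2!split => //; have [b [e ->]] := edge_at_surj eps; have [k Mk] := M_linear b.
rewrite !transplant_fun_at !Mk -sumrN mulr_sumr; apply: eq_bigr => a _.
by case: (ode (edge_at V0 V1 a e) x) => _ [_ f_ode]; rewrite -mulrN f_ode mulrCA.
Qed.

Lemma transplant_fun_einv (f : gE FA -> R -> R) :
  (forall e x, f (einv e) x = f e (1 - x)) ->
  forall eps x, transplant_fun f (einv eps) x = transplant_fun f eps (1 - x).
Proof.
move=> f_einv eps x; have [b [e ->]] := edge_at_surj eps.
rewrite einv_edge_at !transplant_fun_at; congr (M _ _); apply/funext => a.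
by rewrite -einv_edge_at f_einv.
Qed.

Lemma transplant_fun_continuous (f : gE FA -> R -> R) :
  (exists phi, forall e, f e 0 = phi (dminus e)) ->
  exists phi, forall eps, transplant_fun f eps 0 = phi (dminus eps).
Proof.
case=> phi f_phi; apply: vertex_values => eps eps'.
have [b [e ->]] := edge_at_surj eps; have [b' [e' ->]] := edge_at_surj eps'.
move/eqP; rewrite dminus_edge_at_eq // => /andP [/eqP ee' gbb']; rewrite !transplant_fun_at.
have -> : (fun a => f (edge_at V0 V1 a e') 0) = (fun a => f (edge_at V0 V1 a e) 0).
  apply/funext => a; rewrite !f_phi; congr phi; apply/eqP.
  by rewrite dminus_edge_at_eq // ee' eqxx glued_refl.
move: gbb'; apply: M_glued_const => a a' gaa'.
by rewrite !f_phi; congr phi; apply/eqP; rewrite dminus_edge_at_eq // gaa' eqxx.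
Qed.

Lemma transplant_fun_kirchhoff (f : gE FA -> R -> R) :
  (forall e x, derivable (f e) x 1) ->
  (forall v, \sum_(e | dminus e == v) derive1 (f e) 0 = 0) ->
  forall v, \sum_(eps | dminus eps == v) derive1 (transplant_fun f eps) 0 = 0.
Proof.
move=> df f_kirchhoff; apply: kirchhoff_at_sources => eps0.
have [b0 [e0 ->]] := edge_at_surj eps0.
under eq_bigr do rewrite (transplant_fun_derive df _ 0).2.
rewrite big_vertex //; under eq_bigr do under eq_bigr do rewrite transplant_fun_at.
under eq_bigr do rewrite -(linear_form_sumr _ _ (M_linear _)).
apply: M_glued_sum => a0.
by rewrite -(big_vertex V1_sub _ (fun eps => derive1 (f eps) 0)) f_kirchhoff.
Qed.

Lemma transplant_fun_eigenfunction lam (f : gE FA -> R -> R) :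
  kirchhoff_eigenfunction lam f -> kirchhoff_eigenfunction lam (transplant_fun f).
Proof.
case=> ode [f_einv [f_cont f_kirchhoff]].
have df e x : derivable (f e) x 1 by case: (ode e x).
split; [exact: transplant_fun_ode | split; [exact: transplant_fun_einv | split]].
  exact: transplant_fun_continuous.
exact: transplant_fun_kirchhoff.
Qed.

Lemma transplant_indep_eigenfunctions (lam : R) m :
  has_m_indep_eigenfunctions FA lam m -> has_m_indep_eigenfunctions FB lam m.
Proof.
case=> fs [fs_eigen fs_indep]; exists (fun i => transplant_fun (fs i)).
split => [i|c c_vanish]; first exact: transplant_fun_eigenfunction.
apply: fs_indep => eps x x01; have [a [e ->]] := edge_at_surj eps; move: a.
apply: M_inj => b; rewrite (linear_form_lincomb _ _ _ (M_linear b)).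
rewrite -[RHS](c_vanish (edge_at V0 V1 b e) x x01).
by apply: eq_bigr => i _; rewrite transplant_fun_at.
Qed.
End Transplantation.

Section TransplantMap.
Variables (R : realType) (A B : seq nat).
Hypotheses (A_pos : all (fun x => 0 < x)%N A) (B_pos : all (fun x => 0 < x)%N B).
Hypotheses (size_AB : size A = size B) (sumn_AB : sumn A = sumn B).
Hypothesis sumn_gt0 : (0 < sumn A)%N.
Variable rho : tail_copy B -> tail_copy A.
Hypothesis rho_surj : forall a, exists b, rho b = a.
Local Open Scope ring_scope.

Implicit Type u : copy A -> R.

(* [transplant] keeps the block means of u, shifted by [mean_shift u] so that
   the total sum is preserved, and moves the deviations from them along [rho]
   onto the non-first copies of B; the first copy of each block receives minus
   the block total, so block sums of deviations stay zero. *)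
Definition mean_shift u : R :=
  (sumn A)%:R^-1 * \sum_(i < size A) ((nth 0%N A i)%:R - (nth 0%N B i)%:R) * block_mean u i.

Definition deviation u a : R := u a - block_mean u (tag a).

Definition moved_deviation u (b : copy B) : R :=
  \sum_(g : tail_copy B | val g == b) deviation u (val (rho g)).

Definition deviation_transplant u (b : copy B) : R :=
  if (0 < tagged b)%N then moved_deviation u b
  else - \sum_(b' | tag b' == tag b) moved_deviation u b'.

Definition transplant u (b : copy B) : R :=
  block_mean u (tag b) + mean_shift u + deviation_transplant u b.

Lemma linear_form_transplant b : linear_form (fun u => transplant u b).
Proof.
have lin_deviation a : linear_form (fun u => deviation u a).
  by apply: linear_formD; [exact: linear_form_proj | exact/linear_formN/linear_form_block_mean].
have lin_moved b' : linear_form (fun u => moved_deviation u b') by exact: linear_form_sum.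
apply: linear_formD; first apply: linear_formD.
- exact: linear_form_block_mean.
- by apply/linear_formZ/linear_form_sum => i; exact/linear_formZ/linear_form_block_mean.
- by rewrite /deviation_transplant; case: (0 < tagged b)%N; [|apply/linear_formN/linear_form_sum].
Qed.

Lemma moved_deviation_first u (i : 'I_(size B)) : moved_deviation u (first_copy B_pos i) = 0.
Proof. by apply: big_pred0 => g; apply/negbTE; apply: contraTN (valP g) => /eqP ->. Qed.

Lemma block_sum_deviation_transplant u (i : 'I_(size B)) :
  \sum_(b | tag b == i) deviation_transplant u b = 0.
Proof.
rewrite (bigD1 (first_copy B_pos i)) //= {1}/deviation_transplant /=.
rewrite [S in _ + S](eq_bigr (moved_deviation u)) => [|b /andP [b_i b_nfirst]]; last first.
  rewrite /deviation_transplant; suff -> : (0 < tagged b)%N by [].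
  by rewrite lt0n; apply: (contraNneq _ b_nfirst) => b0; rewrite copy_eqE /= b_i b0.
by rewrite [S in - S](bigD1 (first_copy B_pos i)) //= moved_deviation_first add0r addNr.
Qed.

Lemma block_sum_transplant u (i : 'I_(size B)) :
  \sum_(b | tag b == i) transplant u b = (nth 0%N B i)%:R * (block_mean u i + mean_shift u).
Proof.
rewrite big_split /= block_sum_deviation_transplant addr0.
by rewrite (eq_bigr (fun=> block_mean u i + mean_shift u)) => [|b /eqP -> //];
  rewrite sum_block_const mulrC.
Qed.

Lemma deviation_transplant_eq0 u :
  (forall a, deviation u a = 0) -> forall b, deviation_transplant u b = 0.
Proof.
move=> dev0; have moved0 b : moved_deviation u b = 0 by apply: big1 => g _; exact: dev0.
by move=> b; rewrite /deviation_transplant moved0 big1 ?oppr0 ?if_same.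
Qed.

Lemma transplant_block_const u :
  (forall a a', tag a == tag a' -> u a = u a') ->
  forall b b', tag b == tag b' -> transplant u b = transplant u b'.
Proof.
move=> u_const; have dev0 : forall b, deviation_transplant u b = 0.
  apply: deviation_transplant_eq0 => a.
  by rewrite /deviation (block_mean_block_const A_pos) ?subrr // => a' /u_const.
by move=> b b' /eqP tbb'; rewrite /transplant !dev0 tbb'.
Qed.

Lemma transplant_const u :
  (forall a a', u a = u a') -> forall b b', transplant u b = transplant u b'.
Proof.
move=> u_const; have dev0 b : deviation_transplant u b = 0.
  apply: deviation_transplant_eq0 => a.
  by rewrite /deviation (block_mean_block_const A_pos) ?subrr // => a' _; exact: u_const.
have mean_u (i : 'I_(size B)) : block_mean u i = u (first_copy A_pos (cast_ord (esym size_AB) i)).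
  apply: (@block_mean_block_const _ _ A_pos u (first_copy A_pos (cast_ord (esym size_AB) i))).
  by move=> a' _; exact: u_const.
by move=> b b'; rewrite /transplant !dev0 !mean_u; congr (_ + _ + _); exact: u_const.
Qed.

Lemma sum_nth_AB : (\sum_(i < size A) nth 0 A i = \sum_(i < size A) nth 0 B i)%N.
Proof. by rewrite -sumn_ord size_AB -sumn_ord sumn_AB. Qed.

Lemma sum_transplant u : \sum_b transplant u b = \sum_a u a.
Proof.
have shift_sum : \sum_(i < size A) (nth 0%N B i)%:R * mean_shift u =
    \sum_(i < size A) ((nth 0%N A i)%:R - (nth 0%N B i)%:R) * block_mean u i.
  by rewrite -mulr_suml -natr_sum -sum_nth_AB -sumn_ord mulVKf // pnatr_eq0 -lt0n.
rewrite sum_copy_blocks (eq_bigr _ (fun i _ => block_sum_transplant u i)) /=.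
rewrite -size_AB [RHS]sum_copy_blocks; under [RHS]eq_bigr do rewrite (block_sumE A_pos).
under eq_bigr do rewrite mulrDr; rewrite big_split /= shift_sum -big_split /=.
by apply: eq_bigr => i _; rewrite -mulrDl addrC subrK.
Qed.

Lemma mean_shift_eq0 u : (forall i, block_mean u i = 0) -> mean_shift u = 0.
Proof. by move=> mean0; rewrite /mean_shift big1 ?mulr0 // => i _; rewrite mean0 mulr0. Qed.

Lemma transplant_block_sum0 u :
  (forall i : 'I_(size A), \sum_(a | tag a == i) u a = 0) ->
  forall i : 'I_(size B), \sum_(b | tag b == i) transplant u b = 0.
Proof.
move/block_mean_eq0 => mean0 i.
by rewrite block_sum_transplant mean0 mean_shift_eq0 // addr0 mulr0.
Qed.

Lemma transplant_eq0_block_mean u :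
  (forall b, transplant u b = 0) -> forall i : 'I_(size A), block_mean u i = 0.
Proof.
move=> Tu0; have mean_shift_u (i : 'I_(size A)) : block_mean u i = - mean_shift u.
  apply/eqP; rewrite -addr_eq0; have := block_sum_transplant u (cast_ord size_AB i).
  by rewrite big1 // => /esym /eqP; rewrite mulf_eq0 (negbTE (nth_neq0 R B_pos _)).
suff shift0 : mean_shift u = 0 by move=> i; rewrite mean_shift_u shift0 oppr0.
rewrite {1}/mean_shift; under eq_bigr do rewrite mean_shift_u.
by rewrite -mulr_suml sumrB -!natr_sum sum_nth_AB subrr mul0r mulr0.
Qed.

Lemma transplant_inj u : (forall b, transplant u b = 0) -> forall a, u a = 0.
Proof.
move=> Tu0; have mean0 i : block_mean u i = 0.
  apply: block_mean_eq0 => j.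
  by rewrite (block_sumE A_pos) (transplant_eq0_block_mean Tu0) mulr0.
have dev0 b : deviation_transplant u b = 0.
  by have := Tu0 b; rewrite /transplant mean_shift_eq0 // mean0 !add0r.
have tail0 (a : copy A) : (0 < tagged a)%N -> u a = 0.
  move=> a_tail; have [g rho_g] := rho_surj (Sub a a_tail).
  have := dev0 (val g); rewrite /deviation_transplant (valP g) /moved_deviation.
  by rewrite (big_pred1 g) => [|g']; [rewrite rho_g /deviation mean0 subr0 | exact: val_eqE].
move=> a; have [a0|a_tail] := eqVneq (tagged a : nat) 0%N; last by apply: tail0; rewrite lt0n.
have := block_sumE A_pos u (tag a); rewrite mean0 mulr0 (bigD1 a) //= big1 ?addr0 //.
move=> a' /andP [ta' a'_ne]; apply: tail0; rewrite lt0n.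
by apply: (contraNneq _ a'_ne) => a'0; rewrite copy_eqE ta' /= a'0 a0.
Qed.

Lemma transplant_glued_const (G : graph) (V0 V1 : {set gV G}) v u :
  (forall a a', glued V0 V1 v a a' -> u a = u a') ->
  forall b b', glued V0 V1 v b b' -> transplant u b = transplant u b'.
Proof.
rewrite /glued; case: (v \in V1) => [u_const b b' _|].
  by apply: transplant_const => a a'; exact: u_const.
case: (v \in V0); first exact: transplant_block_const.
by move=> _ b b' /eqP ->.
Qed.

Lemma transplant_glued_sum (G : graph) (V0 V1 : {set gV G}) v u :
  (forall a0, \sum_(a | glued V0 V1 v a a0) u a = 0) ->
  forall b0, \sum_(b | glued V0 V1 v b b0) transplant u b = 0.
Proof.
rewrite /glued; case: (v \in V1) => [u_sum0 b0|].
  rewrite sum_transplant; case: (pickP (@predT (copy A))) => [a0 _|no_a].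
    exact: u_sum0 a0.
  exact: big_pred0.
case: (v \in V0) => u_sum0 b0.
  by apply: transplant_block_sum0 => i; exact: u_sum0 (first_copy A_pos i).
rewrite big_pred1_eq (_ : u = fun=> 0) ?(linear_form0 (linear_form_transplant b0)) //.
by apply/funext => a; rewrite -(u_sum0 a) big_pred1_eq.
Qed.
End TransplantMap.

Lemma contracted_frame_union_isospectral (R : realType) (G : graph) (V0 V1 : {set gV G})
    (A B : seq nat) :
  V1 \subset V0 -> all (fun x => 0 < x) A -> all (fun x => 0 < x) B ->
  size A = size B -> sumn A = sumn B -> 0 < sumn A ->
  isospectral R (contracted_frame_union V0 V1 A) (contracted_frame_union V0 V1 B).
Proof.
move=> V1_sub A_pos B_pos size_AB sumn_AB sumn_gt0.
have transfer X Y : all (fun x => 0 < x) X -> all (fun x => 0 < x) Y ->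
    size X = size Y -> sumn X = sumn Y -> 0 < sumn X -> forall (lam : R) m,
    has_m_indep_eigenfunctions (contracted_frame_union V0 V1 X) lam m ->
    has_m_indep_eigenfunctions (contracted_frame_union V0 V1 Y) lam m.
  move=> X_pos Y_pos size_XY sumn_XY sumn_X_gt0 lam m.
  have [rho rho_surj] : exists rho : tail_copy Y -> tail_copy X, forall a, exists b, rho b = a.
    by apply: exists_surj_of_card; rewrite !card_tail_copy // size_XY sumn_XY.
  apply: (transplant_indep_eigenfunctions V1_sub (M := transplant rho)).
  - exact: linear_form_transplant.
  - exact: transplant_inj.
  - exact: transplant_glued_const.
  - exact: transplant_glued_sum.
by move=> lam m; split; apply: transfer; rewrite // -?size_AB -?sumn_AB.
Qed.

Unset Implicit Arguments.

Theorem corollary5p9 (R : realType) (G : graph) (V0 V1 : {set gV G})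
    (s r : nat) (A B : seq nat) :
  wf_graph G ->
  V1 \proper V0 ->
  4 <= r ->
  is_partition s r A -> is_partition s r B ->
  ~~ perm_eq A B ->
  isospectral R (contracted_frame_union V0 V1 A) (contracted_frame_union V0 V1 B) /\
  ~ graph_iso (contracted_frame_union V0 V1 A) (contracted_frame_union V0 V1 B).
Proof.
move=> G_wf V1_proper r_ge4 /andP [/andP [/eqP sA A_pos] /eqP rA].
move=> /andP [/andP [/eqP sB B_pos] /eqP rB] neq_AB.
have size_AB : size A = size B by rewrite sA sB.
have sumn_AB : sumn A = sumn B by rewrite rA rB.
split; last exact: contracted_frame_union_not_iso.
apply: contracted_frame_union_isospectral (proper_sub V1_proper) A_pos B_pos size_AB sumn_AB _.
by rewrite rA (leq_trans _ r_ge4).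
Qed.
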